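(* Let $m,K$ be positive integers and $b_1,\dots,b_{3m}$ positive integers with $K/4<b_i<K/2$ and $\sum_i b_i=mK$. Set $W=100(5m)^2K$, $a_i=b_i+W$, $L=3W+K$, $\epsilon=1/(400(5m)^2)$, $h=\lfloor 4\epsilon L\rfloor$, $H=L+h$. Let $X$ be the multiset consisting of $a_1,\dots,a_{3m}$, $m$ copies of $-H$ and $m$ copies of $h$, and let $T_{\min}$ be a minimum-cost addition tree over $X$. For every node $z$ of $T_{\min}$ (identified with its value): (1) if $z<0$ then $|z|\le H$; (2) if $z>0$ then $z<H$.
   Context: An addition tree over a multiset $X$ is a full binary tree whose leaves are labeled by the elements of $X$ (each used once), each internal node having value equal to the sum of its children's values; its cost is the sum of the absolute values of the values of its internal nodes, and $T_{\min}$ is an addition tree over $X$ of minimum cost. *)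

From mathcomp Require Import all_boot all_order all_algebra.
Set Implicit Arguments. Unset Strict Implicit. Unset Printing Implicit Defensive.
Import Order.TTheory GRing.Theory Num.Theory.
Local Open Scope ring_scope.

Inductive atree : Type :=
| ALeaf of int
| ANode of atree & atree.

Fixpoint leaves (t : atree) : seq int :=
  match t with ALeaf x => [:: x] | ANode l r => leaves l ++ leaves r end.

Fixpoint tval (t : atree) : int :=
  match t with ALeaf x => x | ANode l r => tval l + tval r end.

Fixpoint tcost (t : atree) : int :=
  match t with ALeaf _ => 0 | ANode l r => `|tval l + tval r| + tcost l + tcost r end.

Fixpoint node_vals (t : atree) : seq int :=
  match t with ALeaf x => [:: x] | ANode l r => (tval l + tval r) :: node_vals l ++ node_vals r end.

Definition addition_tree_over (X : seq int) (t : atree) : Prop :=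
  perm_eq (leaves t) X.

Definition min_addition_tree (X : seq int) (t : atree) : Prop :=
  addition_tree_over X t /\
  forall t', addition_tree_over X t' -> tcost t <= tcost t'.

From Pilot Require Import Defs.
From mathcomp Require Import all_boot all_order all_algebra zify.
Import Order.TTheory GRing.Theory Num.Theory.
Import Pilot.Defs.
Set Implicit Arguments. Unset Strict Implicit. Unset Printing Implicit Defensive.
Local Open Scope ring_scope.

(* Order the integers by [key]: by absolute value, a positive value ranking
   just above the negative one of the same size.  In the theorem every leaf
   has key at most [2 H] and the root has value [0].  In a minimum-cost tree
   no internal node can have key larger than every other node, leaf and root
   included: if [z = x + y] were such a node, below a parent [z + s], then
   rotating the parent into [x + (y + s)] or [y + (x + s)] would strictly
   decrease the cost, as [|y + s| < |z|] or [|x + s| < |z|].  Hence every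
   node has key at most [2 H], which is exactly the claim. *)

Inductive subtree : atree -> atree -> Prop :=
| subtree_refl t : subtree t t
| subtree_l P l r : subtree P l -> subtree P (ANode l r)
| subtree_r P l r : subtree P r -> subtree P (ANode l r).

Lemma tval_sum_leaves (t : atree) : tval t = \sum_(x <- leaves t) x.
Proof.
elim: t => [x|l IHl r IHr] /=; first by rewrite big_seq1.
by rewrite big_cat IHl IHr.
Qed.

Lemma perm_tval (t t' : atree) : perm_eq (leaves t) (leaves t') -> tval t = tval t'.
Proof. by move=> pt; rewrite !tval_sum_leaves (perm_big _ pt). Qed.

Lemma tval_in_node_vals (t : atree) : tval t \in node_vals t.
Proof. by case: t => [x|l r] /=; rewrite inE eqxx. Qed.

Lemma subtree_trans P Q T : subtree P Q -> subtree Q T -> subtree P T.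
Proof.
move=> PQ QT; elim: QT PQ => [//|R l r _ IH /IH|R l r _ IH /IH].
- exact: subtree_l.
- exact: subtree_r.
Qed.

Lemma subtree_children l r T : subtree (ANode l r) T -> subtree l T /\ subtree r T.
Proof. by move=> sub; split; apply: subtree_trans sub; constructor; apply: subtree_refl. Qed.

Lemma subtree_tval P T : subtree P T -> tval P \in node_vals T.
Proof.
elim=> [t|Q l r _ IH|Q l r _ IH]; first exact: tval_in_node_vals.
- by rewrite /= inE mem_cat IH orbT.
- by rewrite /= inE mem_cat IH !orbT.
Qed.

Lemma subtree_parent P T : subtree P T ->
  P = T \/ exists S, subtree (ANode P S) T \/ subtree (ANode S P) T.
Proof.
elim=> [t|Q l r _ [->|[S [sub|sub]]]|Q l r _ [->|[S [sub|sub]]]].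
- by left.
- by right; exists r; left; apply: subtree_refl.
- by right; exists S; left; apply: subtree_l.
- by right; exists S; right; apply: subtree_l.
- by right; exists l; right; apply: subtree_refl.
- by right; exists S; left; apply: subtree_r.
- by right; exists S; right; apply: subtree_r.
Qed.

Lemma subtree_replace P T P' : subtree P T -> perm_eq (leaves P') (leaves P) ->
  exists T', perm_eq (leaves T') (leaves T) /\ tcost T' = tcost T - tcost P + tcost P'.
Proof.
move=> sub; elim: sub P' => [t|Q l r _ IH|Q l r _ IH] P' pP'.
- by exists P'; split => //; lia.
- have [l' [pl' cl']] := IH P' pP'.
  exists (ANode l' r); split; first by rewrite /= perm_cat2r.
  by rewrite /= cl' (perm_tval pl'); lia.
- have [r' [pr' cr']] := IH P' pP'.
  exists (ANode l r'); split; first by rewrite /= perm_cat2l.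
  by rewrite /= cr' (perm_tval pr'); lia.
Qed.

Lemma min_addition_tree_subtree X T P :
  min_addition_tree X T -> subtree P T -> min_addition_tree (leaves P) P.
Proof.
move=> [TX Tmin] sub; split => [|P' P'P]; first exact: perm_refl.
have [T' [T'T cT']] := subtree_replace sub P'P.
by have := Tmin T' (perm_trans T'T TX); rewrite cT'; lia.
Qed.

Lemma min_addition_tree_swap X l r :
  min_addition_tree X (ANode l r) -> min_addition_tree X (ANode r l).
Proof.
move=> [lrX lrmin]; split => [|t tX]; first by rewrite /addition_tree_over /= perm_catC.
by have := lrmin t tX; rewrite /= addrC; lia.
Qed.

Lemma min_addition_tree_rotate X A B S :
  min_addition_tree X (ANode (ANode A B) S) ->
  `|tval A + tval B| <= `|tval B + tval S| /\ `|tval A + tval B| <= `|tval A + tval S|.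
Proof.
move=> [ABSX ABSmin].
have pABS : perm_eq (leaves A ++ leaves B ++ leaves S) X by rewrite catA.
have pBAS : perm_eq (leaves B ++ leaves A ++ leaves S) X by rewrite perm_catCA catA.
have := ABSmin (ANode A (ANode B S)) pABS; have := ABSmin (ANode B (ANode A S)) pBAS.
by rewrite /=; lia.
Qed.

Lemma exists_minimal_node (p : pred int) T :
  (exists2 v, v \in node_vals T & p v) -> (forall x, x \in leaves T -> ~~ p x) ->
  exists A B, [/\ subtree (ANode A B) T, p (tval A + tval B), ~~ p (tval A) & ~~ p (tval B)].
Proof.
elim: T => [x|l IHl r IHr] [v v_in pv] leaves_p.
  by move: v_in pv; rewrite inE => /eqP ->; rewrite (negbTE (leaves_p x _)) ?inE.
have [pl|npl] := boolP (has p (node_vals l)).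
  have [x x_in|A [B [sub ?]]] := IHl (hasP pl); first by apply/leaves_p; rewrite mem_cat x_in.
  by exists A, B; split => //; apply: subtree_l.
have [pr|npr] := boolP (has p (node_vals r)).
  have [x x_in|A [B [sub ?]]] := IHr (hasP pr).
    by apply/leaves_p; rewrite mem_cat x_in orbT.
  by exists A, B; split => //; apply: subtree_r.
move: v_in; rewrite /= inE mem_cat => /orP[/eqP v_def|/orP[v_in|v_in]].
- exists l, r; split; rewrite -?v_def //; first exact: subtree_refl.
  + by apply: contra npl => pl; apply/hasP; exists (tval l); rewrite ?tval_in_node_vals.
  + by apply: contra npr => pr; apply/hasP; exists (tval r); rewrite ?tval_in_node_vals.
- by case/hasP: npl; exists v.
- by case/hasP: npr; exists v.
Qed.

Definition key (z : int) : nat := if 0 < z then (2 * `|z| + 1)%N else (2 * `|z|)%N.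

Lemma key_le_double (z : int) (n : nat) :
  (key z <= 2 * n)%N <-> (z < 0 -> `|z| <= n%:Z) /\ (0 < z -> z < n%:Z).
Proof. by rewrite /key; case: ifP; lia. Qed.

(* For [z = x + y] the conditions on keys force [x], [y] to lie strictly
   between [0] and [z], and [s] between [-z] and [0] (or symmetrically). *)
Lemma rotation_decreases_key_max (x y s : int) (k : nat) :
  key (x + y) = k -> (key x < k)%N -> (key y < k)%N -> (key s <= k)%N ->
  (key (x + y + s) <= k)%N -> `|y + s| < `|x + y| \/ `|x + s| < `|x + y|.
Proof. by rewrite /key; case: ifP; case: ifP; case: ifP; case: ifP; case: ifP; lia. Qed.

Lemma min_addition_tree_sibling X T A B S : min_addition_tree X T ->
  subtree (ANode (ANode A B) S) T \/ subtree (ANode S (ANode A B)) T ->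
  [/\ tval S \in node_vals T, tval A + tval B + tval S \in node_vals T,
      `|tval A + tval B| <= `|tval B + tval S| & `|tval A + tval B| <= `|tval A + tval S|].
Proof.
move=> Tmin [] sub.
- have [rotB rotA] := min_addition_tree_rotate (min_addition_tree_subtree Tmin sub).
  by split=> //; [apply: subtree_tval (subtree_children sub).2 | apply: subtree_tval sub].
- have [rotB rotA] :=
    min_addition_tree_rotate (min_addition_tree_swap (min_addition_tree_subtree Tmin sub)).
  split=> //; first exact: subtree_tval (subtree_children sub).1.
  by rewrite addrC; apply: subtree_tval sub.
Qed.

Lemma min_addition_tree_key_le X T (k : nat) :
  min_addition_tree X T -> (key (tval T) <= k)%N ->
  (forall x, x \in X -> (key x <= k)%N) -> forall z, z \in node_vals T -> (key z <= k)%N.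
Proof.
move=> Tmin root_k X_k z z_in; rewrite leqNgt; apply/negP => k_lt.
pose in_keys n := n \in map key (node_vals T).
have in_keys_le n : in_keys n -> (n <= \max_(v <- node_vals T) key v)%N.
  by case/mapP => v v_in ->; apply: leq_bigmax_seq.
have [M /mapP[v v_in M_def] M_max] :=
  ex_maxnP (ex_intro in_keys _ (map_f key z_in)) in_keys_le.
have le_M u : u \in node_vals T -> (key u <= M)%N by move=> u_in; apply/M_max/map_f.
have k_lt_M : (k < M)%N by apply: leq_trans k_lt (le_M z z_in).
have leaves_M x : x \in leaves T -> key x != M.
  by move=> x_in; rewrite neq_ltn (leq_ltn_trans (X_k x _)) // -(perm_mem Tmin.1).
have v_M : key v == M by rewrite M_def.
have [A [B [sub /eqP AB_M A_M B_M]]] :=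
  exists_minimal_node (p := fun u => key u == M) (ex_intro2 _ _ v v_in v_M) leaves_M.
have lt_M u : u \in node_vals T -> key u != M -> (key u < M)%N.
  by move=> u_in; rewrite ltn_neqAle le_M // andbT.
have [AB_root|[S sub_par]] := subtree_parent sub.
  by move: root_k k_lt_M; rewrite -AB_root /= AB_M; lia.
have [S_in par_in rotB rotA] := min_addition_tree_sibling Tmin sub_par.
have [A_in B_in] := subtree_children sub.
have := rotation_decreases_key_max AB_M (lt_M _ (subtree_tval A_in) A_M)
  (lt_M _ (subtree_tval B_in) B_M) (le_M _ S_in) (le_M _ par_in).
by lia.
Qed.

Theorem lemma2p6 (m K : nat) (b : 'I_(3 * m) -> nat) (T : atree) :
  (0 < m)%N -> (0 < K)%N ->
  (forall i, 0 < b i)%N ->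
  (forall i, K < 4 * b i /\ 2 * b i < K)%N ->
  (\sum_(i < 3 * m) b i = m * K)%N ->
  let W := (100 * (5 * m) ^ 2 * K)%N in
  let L := (3 * W + K)%N in
  let h := ((4 * L) %/ (400 * (5 * m) ^ 2))%N in
  let H := (L + h)%N in
  let X := [seq ((b i + W)%N)%:Z | i <- enum 'I_(3 * m)]
           ++ nseq m (- (H%:Z)) ++ nseq m (h%:Z) in
  min_addition_tree X T ->
  forall z, z \in node_vals T ->
    (z < 0 -> `|z| <= H%:Z) /\ (0 < z -> z < H%:Z).
Proof.
move=> _ K_gt0 _ b_bounds b_sum W L h H X Tmin z z_in.
have X_sum0 : \sum_(x <- X) x = 0.
  rewrite !big_cat /= !big_nseq !iter_addr_0 big_map big_enum /=.
  rewrite -(big_morph Posz PoszD erefl) big_split /= sum_nat_const card_ord b_sum.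
  rewrite /H /L; lia.
have root0 : tval T = 0 by rewrite tval_sum_leaves (perm_big _ Tmin.1).
have X_key x : x \in X -> (key x <= 2 * H)%N.
  rewrite !mem_cat => /or3P[/mapP[i _ ->]|/nseqP[-> _]|/nseqP[-> _]]; apply/key_le_double.
  - by have := b_bounds i; rewrite /H /L; lia.
  - lia.
  - rewrite /H /L; lia.
by apply/key_le_double/(min_addition_tree_key_le Tmin) => //; rewrite root0.
Qed.
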